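(* Let $r,q$ be positive integers, and let $k\ge 1$, $p_1,\dots,p_k\ge 1$ be integers with $\frac{r}{q}=\frac{k-1}{\sum_{i=1}^k p_i}$. Let $s_i$ ($1\le i\le k$), $a_{ij}$ ($1\le i\le k$, $1\le j\le p_i$) and $\nu$ be integers, with all $a_{ij}>0$. Then the identity $$\left\lceil \frac{rn}{q}\right\rceil=\sum_{i=1}^k \left\lceil \frac{r\left(n-s_i-\sum_{j=1}^{p_i}\left\lceil \frac{r(n-a_{ij})}{q}\right\rceil\right)}{q}\right\rceil+\nu$$ holds for all positive integers $n$ if and only if it holds for all integers $n$ with $0<n\le q^2$.
   Context: This identity expresses that the sequence $B(n)=\lceil rn/q\rceil$ (defined for all integers $n$) formally satisfies the nested recursion $R(n)=\sum_{i=1}^k R\big(n-s_i-\sum_{j=1}^{p_i}R(n-a_{ij})\big)+\nu$, i.e. substituting $B$ for $R$ on both sides gives an equality (no claim is made that the recursion generates $B$ from initial conditions). *)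

From mathcomp Require Import all_boot all_order all_algebra.
Unset Printing Implicit Defensive.
Import Order.TTheory GRing.Theory Num.Theory.
Local Open Scope ring_scope.

Definition B (r q : nat) (x : int) : int :=
  Num.ceil ((r%:R * x%:~R) / q%:R : rat).

Definition nested_identity (r q k : nat) (p : 'I_k -> nat) (s : 'I_k -> int)
    (a : forall i : 'I_k, 'I_(p i) -> int) (nu : int) (n : int) : Prop :=
  B r q n = \sum_(i < k) B r q (n - s i - \sum_(j < p i) B r q (n - a i j)) + nu.

From mathcomp Require Import all_boot all_order all_algebra.
From mathcomp Require Import zify ring.
Import Order.TTheory GRing.Theory Num.Theory.
Local Open Scope ring_scope.

(* Since B(x + q m) = B(x) + r m, shifting n by q^2 adds r q to the left-hand
   side and r (q - p_i r) to the i-th summand on the right; the balance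
   r (p_1 + ... + p_k) = (k - 1) q makes both total shifts equal to r q.
   Hence the identity is q^2-periodic in n, and the cases 0 < n <= q^2
   propagate to all positive n. *)

Lemma eq_divr_nat_mul {m n u v : nat} : (0 < m)%N -> (0 < n)%N ->
  (m%:R / n%:R : rat) = u%:R / v%:R -> (m * v = u * n)%N.
Proof.
move=> m_gt0 n_gt0 eq_frac.
have n_neq0 : (n%:R : rat) != 0 by rewrite pnatr_eq0 -lt0n.
have v_neq0 : (v%:R : rat) != 0.
  apply/negP => /eqP v0; move: eq_frac; rewrite v0 invr0 mulr0 => /eqP.
  by rewrite mulf_eq0 invr_eq0 (negPf n_neq0) orbF pnatr_eq0 gtn_eqF.
by move/eqP: eq_frac; rewrite eqr_div // -!natrM eqr_nat => /eqP.
Qed.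

Section Periodicity.

Variables r q : nat.
Hypothesis q_gt0 : (0 < q)%N.

Lemma B_addq (x m : int) : B r q (x + q%:Z * m) = B r q x + r%:Z * m.
Proof.
have q_neq0 : (q%:R : rat) != 0 by rewrite pnatr_eq0 -lt0n.
rewrite /B; have -> : (r%:R * (x + q%:Z * m)%:~R / q%:R : rat)
    = r%:R * x%:~R / q%:R + ((r%:Z * m)%:~R : rat).
  by rewrite !intrD !intrM -!pmulrn; field.
by rewrite ceilDrz ?intrKceil // intr_int.
Qed.

Lemma sum_B_addq (l : nat) (f : 'I_l -> int) (m : int) :
  \sum_(j < l) B r q (f j + q%:Z * m) = \sum_(j < l) B r q (f j) + l%:Z * (r%:Z * m).
Proof.
rewrite (eq_bigr (fun j => B r q (f j) + r%:Z * m)) => [|j _]; last exact: B_addq.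
by rewrite big_split /= sumr_const card_ord -mulr_natl natz.
Qed.

Variables (k : nat) (p : 'I_k -> nat) (s : 'I_k -> int)
  (a : forall i : 'I_k, 'I_(p i) -> int) (nu : int).
Hypothesis balance : r%:Z * (\sum_(i < k) p i)%:Z = (k%:Z - 1) * q%:Z.

Lemma nested_sum_addqq (n : int) :
  \sum_(i < k) B r q (n + q%:Z * q%:Z - s i - \sum_(j < p i) B r q (n + q%:Z * q%:Z - a i j))
  = \sum_(i < k) B r q (n - s i - \sum_(j < p i) B r q (n - a i j)) + r%:Z * q%:Z.
Proof.
have shift_i i : n + q%:Z * q%:Z - s i - \sum_(j < p i) B r q (n + q%:Z * q%:Z - a i j)
    = n - s i - \sum_(j < p i) B r q (n - a i j) + q%:Z * (q%:Z - (p i)%:Z * r%:Z).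
  rewrite (eq_bigr (fun j => B r q (n - a i j + q%:Z * q%:Z))) => [|j _].
    by rewrite sum_B_addq; ring.
  by rewrite addrAC.
rewrite (eq_bigr (fun i => B r q (n - s i - \sum_(j < p i) B r q (n - a i j))
                           + r%:Z * (q%:Z - (p i)%:Z * r%:Z))) => [|i _]; last first.
  by rewrite shift_i B_addq.
rewrite big_split /=; congr (_ + _).
rewrite -mulr_sumr sumrB sumr_const card_ord -mulr_suml.
have -> : \sum_(i < k) (p i)%:Z = (\sum_(i < k) p i)%:Z.
  by rewrite -natz natr_sum; apply: eq_bigr => i _; rewrite natz.
by rewrite mulrBr mulrA balance -mulr_natl natz; ring.
Qed.

Lemma nested_identity_addqq (n : int) :
  nested_identity r q k p s a nu n <->
  nested_identity r q k p s a nu (n + q%:Z * q%:Z).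
Proof.
rewrite /nested_identity B_addq nested_sum_addqq addrAC.
by split=> [-> // |]; apply: addIr.
Qed.

End Periodicity.

Theorem theorem1 (r q k : nat) (p : 'I_k -> nat) (s : 'I_k -> int)
    (a : forall i : 'I_k, 'I_(p i) -> int) (nu : int) :
  (0 < r)%N -> (0 < q)%N -> (1 <= k)%N ->
  (forall i, 1 <= p i)%N ->
  (r%:R / q%:R : rat) = (k - 1)%:R / (\sum_(i < k) p i)%:R ->
  (forall i j, 0 < a i j) ->
  (forall n : int, 0 < n -> nested_identity r q k p s a nu n) <->
  (forall n : int, 0 < n <= (q ^ 2)%:Z -> nested_identity r q k p s a nu n).
Proof.
move=> r_gt0 q_gt0 k_ge1 _ ratio _.
have balance : r%:Z * (\sum_(i < k) p i)%:Z = (k%:Z - 1) * q%:Z.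
  by rewrite -PoszM (eq_divr_nat_mul r_gt0 q_gt0 ratio) PoszM subzn.
split=> [H n /andP[/H] // | H [N|N] //].
elim/ltn_ind: N => N IH N_gt0.
have [N_le | N_gt] := leqP N (q ^ 2); first by apply: H; rewrite N_gt0 lez_nat.
have -> : Posz N = Posz (N - q ^ 2) + q%:Z * q%:Z.
  by rewrite -PoszM -PoszD mulnn subnK // ltnW.
apply: (nested_identity_addqq _ _ q_gt0 _ _ _ _ _ balance _).1.
apply: IH; rewrite ?ltz_nat; lia.
Qed.
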